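(* Let $n\ge2$ and $1\le k\le n$. Let ${}^1\mathcal M_n^k$ (resp. ${}^n\mathcal M_n^k$) be the set of monotone permutations $\pi\in S_n$ with $\pi(1)=k$ and $\pi(n)=1$ (resp. $\pi(n)=n$). For $\pi\in{}^1\mathcal M_n^k$ define $\tilde\pi\in S_{n-1}$ by $\tilde\pi(i)=\pi(i)-1$, and for $\pi\in{}^n\mathcal M_n^k$ by $\tilde\pi(i)=\pi(i)$, $i=1,\dots,n-1$. Then $\pi\mapsto\tilde\pi$ is a bijection ${}^1\mathcal M_n^k\to\mathcal M_{n-1}^{k-1}$ (resp. ${}^n\mathcal M_n^k\to\mathcal M_{n-1}^{k}$), and $(-1)^{\operatorname{dr}(\tilde\pi)}=(-1)^{\operatorname{dr}(\pi)+n}$ (resp. $(-1)^{\operatorname{dr}(\tilde\pi)}=(-1)^{\operatorname{dr}(\pi)}$).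
   Context: A permutation $\pi\in S_n$ is monotone if, for each $i=1,\dots,n$, either $\pi(j)<\pi(i)$ for all $j<i$, or $\pi(j)>\pi(i)$ for all $j<i$; in the second case $i$ is called a drop of $\pi$ ($i=1$ is not a drop). $\mathcal M_n^k$ denotes the set of monotone permutations with $\pi(1)=k$, and $\operatorname{dr}(\pi)$ the sum of all drops of $\pi$. *)

(* Permutations of {1,...,n} are modelled by 'S_n = {perm 'I_n},
   i.e. 0-based: position i (1-based) is the ordinal i-1, value v (1-based) is v-1. *)
From HB Require Import structures.
From mathcomp Require Import all_boot all_order all_algebra all_fingroup.
Set Implicit Arguments. Unset Strict Implicit. Unset Printing Implicit Defensive.

Definition monotone n (p : 'S_n) : bool :=
  [forall i : 'I_n,
     [forall j : 'I_n, (j < i)%N ==> (p j < p i)%N]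
  || [forall j : 'I_n, (j < i)%N ==> (p i < p j)%N]].

Definition is_drop n (p : 'S_n) (i : 'I_n) : bool :=
  (i != 0 :> nat) && [forall j : 'I_n, (j < i)%N ==> (p i < p j)%N].

(* dr(pi) = sum of the drops, drops being counted as 1-based positions. *)
Definition dr n (p : 'S_n) : nat := \sum_(i < n | is_drop p i) i.+1.

Definition Mset n k : {set 'S_n} :=
  [set p : 'S_n | monotone p &&
     [forall i : 'I_n, (i == 0 :> nat) ==> ((p i).+1 == k)]].

Definition M1set n k : {set 'S_n} :=
  [set p in Mset n k | [forall i : 'I_n, (i == n.-1 :> nat) ==> ((p i).+1 == 1)]].

Definition Mnset n k : {set 'S_n} :=
  [set p in Mset n k | [forall i : 'I_n, (i == n.-1 :> nat) ==> ((p i).+1 == n)]].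

(* pi~ for pi in ^1M : pi~(i) = pi(i) - 1, i = 1..n-1 (here n = m.+2).
   Built from the function graph; the default 1 is only used if the graph is
   not injective (which does not happen on ^1M). *)
Definition tilde1 m (p : 'S_m.+2) : 'S_m.+1 :=
  insubd (1%g : 'S_m.+1)
    [ffun i : 'I_m.+1 => inord ((p (widen_ord (leqnSn m.+1) i) : nat) - 1) : 'I_m.+1].

Definition tilden m (p : 'S_m.+2) : 'S_m.+1 :=
  insubd (1%g : 'S_m.+1)
    [ffun i : 'I_m.+1 => inord (p (widen_ord (leqnSn m.+1) i) : nat) : 'I_m.+1].

From HB Require Import structures.
From mathcomp Require Import all_boot all_order all_algebra all_fingroup.
From mathcomp Require Import zify.
Import GRing.Theory.
Set Implicit Arguments.
Unset Strict Implicit.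
Unset Printing Implicit Defensive.

(* Deleting the last entry of a permutation whose last value is extremal
   (1 or n) does not change the relative order of the other entries, hence
   neither monotonicity nor the drops among the first n-1 positions.  The
   last position itself is a new minimum when pi(n) = 1, which adds the drop
   n to dr, and a new maximum when pi(n) = n, which adds nothing.  The inverse
   map inserts the extremal value back at the end ([lift_perm]). *)

Section Restriction.
Variable n : nat.
Local Notation w i := (widen_ord (leqnSn n) i).

Lemma widen_lift_max (i : 'I_n) : w i = lift ord_max i.
Proof. by apply: ord_inj; rewrite lift_max. Qed.

Lemma ord_max_or_widen (x : 'I_n.+1) : x = ord_max \/ exists i, x = w i.
Proof.
case: (unliftP ord_max x) => [i ->|->]; last by left.
by right; exists i; rewrite widen_lift_max.
Qed.

Lemma forall_lt_widen (F : 'I_n.+1 -> bool) (i : 'I_n) :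
  [forall j : 'I_n.+1, (j < w i)%N ==> F j] =
  [forall j : 'I_n, (j < i)%N ==> F (w j)].
Proof.
apply/forallP/forallP => [H j|H j]; first exact: H (w j).
apply/implyP; case: (ord_max_or_widen j) => [->|[j' ->]].
  by rewrite /= ltnNge ltnW.
exact: implyP (H j').
Qed.

Lemma perm_widen_eq (p1 p2 : 'S_n.+1) :
  p1 ord_max = p2 ord_max :> nat -> (forall i, p1 (w i) = p2 (w i) :> nat) ->
  p1 = p2.
Proof.
move=> eq_max eq_widen; apply/permP => x; apply: ord_inj.
by case: (ord_max_or_widen x) => [->|[i ->]]; rewrite ?eq_widen.
Qed.

Lemma perm_widen_inj (p : 'S_n.+1) : injective (fun i => p (w i) : nat).
Proof.
move=> i j /ord_inj /perm_inj /(congr1 (@nat_of_ord _)) eq_ij.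
exact: ord_inj.
Qed.

Lemma perm_neq_last (p : 'S_n.+1) (j : 'I_n.+1) :
  (j < n)%N -> p j != p ord_max.
Proof. by move=> lt_j; rewrite (inj_eq perm_inj) -val_eqE /= neq_ltn lt_j. Qed.

Lemma gt_last_min (p : 'S_n.+1) : p ord_max = 0 :> nat ->
  forall j : 'I_n.+1, (j < n)%N -> (p ord_max < p j)%N.
Proof.
move=> p_last j /(perm_neq_last p); rewrite -val_eqE /= p_last.
by rewrite lt0n eq_sym.
Qed.

Lemma lt_last_max (p : 'S_n.+1) : p ord_max = n :> nat ->
  forall j : 'I_n.+1, (j < n)%N -> (p j < p ord_max)%N.
Proof.
move=> p_last j /(perm_neq_last p); rewrite -val_eqE /= p_last => neq_n.
by rewrite ltn_neqAle neq_n -ltnS ltn_ord.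
Qed.

Lemma lift_perm_min_widen (q : 'S_n) (i : 'I_n) :
  lift_perm ord_max ord0 q (w i) = q i + 1 :> nat.
Proof. by rewrite widen_lift_max lift_perm_lift lift0 addn1. Qed.

Lemma lift_perm_max_widen (q : 'S_n) (i : 'I_n) :
  lift_perm ord_max ord_max q (w i) = q i + 0 :> nat.
Proof. by rewrite widen_lift_max lift_perm_lift lift_max addn0. Qed.

Section Shift.
Variables (p : 'S_n.+1) (q : 'S_n) (c : nat).
Hypothesis pE : forall i, p (w i) = q i + c :> nat.

Lemma prefix_max_widen (i : 'I_n) :
  [forall j : 'I_n.+1, (j < w i)%N ==> (p j < p (w i))%N] =
  [forall j : 'I_n, (j < i)%N ==> (q j < q i)%N].
Proof.
by rewrite forall_lt_widen; apply: eq_forallb => j; rewrite !pE ltn_add2r.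
Qed.

Lemma prefix_min_widen (i : 'I_n) :
  [forall j : 'I_n.+1, (j < w i)%N ==> (p (w i) < p j)%N] =
  [forall j : 'I_n, (j < i)%N ==> (q i < q j)%N].
Proof.
by rewrite forall_lt_widen; apply: eq_forallb => j; rewrite !pE ltn_add2r.
Qed.

Lemma is_drop_widen (i : 'I_n) : is_drop p (w i) = is_drop q i.
Proof. by rewrite /is_drop prefix_min_widen. Qed.

Lemma dr_widen : dr p = (dr q + is_drop p ord_max * n.+1)%N.
Proof.
rewrite /dr big_mkcond big_ord_recr /= -big_mkcond /=.
congr (_ + _)%N; first by apply: eq_bigl => i; rewrite is_drop_widen.
by case: (is_drop p ord_max); rewrite ?mul1n.
Qed.

Lemma monotone_restrict : monotone p -> monotone q.
Proof.
move=> /forallP mono_p; apply/forallP => i.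
by move: (mono_p (w i)); rewrite prefix_max_widen prefix_min_widen.
Qed.

Lemma monotone_extend :
  monotone q ->
  (forall j : 'I_n.+1, (j < n)%N -> (p j < p ord_max)%N) \/
  (forall j : 'I_n.+1, (j < n)%N -> (p ord_max < p j)%N) ->
  monotone p.
Proof.
move=> /forallP mono_q last_extremal; apply/forallP => x.
case: (ord_max_or_widen x) => [->|[i ->]]; last first.
  by rewrite prefix_max_widen prefix_min_widen.
by case: last_extremal => H; apply/orP; [left|right];
  apply/forallP => j; apply/implyP; apply: H.
Qed.

End Shift.

Lemma forall_at_ord0 (P : 'I_n.+1 -> bool) :
  [forall i : 'I_n.+1, (i == 0 :> nat) ==> P i] = P ord0.
Proof.
apply/forallP/idP => [H|H i]; first exact: implyP (H ord0) _.
by apply/implyP => /eqP i0; rewrite (_ : i = ord0) //; apply: val_inj.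
Qed.

Lemma forall_at_ord_max (P : 'I_n.+1 -> bool) :
  [forall i : 'I_n.+1, (i == n :> nat) ==> P i] = P ord_max.
Proof.
apply/forallP/idP => [H|H i]; first exact: implyP (H ord_max) _.
by apply/implyP => /eqP i_n; rewrite (_ : i = ord_max) //; apply: val_inj.
Qed.

Lemma MsetE k (p : 'S_n.+1) :
  (p \in Mset n.+1 k) = monotone p && ((p ord0).+1 == k)%N.
Proof. by rewrite inE forall_at_ord0. Qed.

Lemma M1setE k (p : 'S_n.+1) :
  (p \in M1set n.+1 k) =
  [&& monotone p, ((p ord0).+1 == k)%N & (p ord_max == 0 :> nat)].
Proof. by rewrite inE MsetE forall_at_ord_max andbA. Qed.

Lemma MnsetE k (p : 'S_n.+1) :
  (p \in Mnset n.+1 k) =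
  [&& monotone p, ((p ord0).+1 == k)%N & (p ord_max == n :> nat)].
Proof. by rewrite inE MsetE forall_at_ord_max eqSS andbA. Qed.

End Restriction.

Lemma insubd_inord_ffunE n (f : 'I_n.+1 -> nat) :
  (forall i, f i < n.+1)%N -> injective f ->
  forall i,
    insubd (1%g : 'S_n.+1) [ffun i => inord (f i) : 'I_n.+1] i = f i :> nat.
Proof.
move=> f_lt f_inj.
have inj : injectiveb [ffun i => inord (f i) : 'I_n.+1].
  apply/injectiveP => i j; rewrite !ffunE => /(congr1 (@nat_of_ord _)).
  by rewrite !inordK //; apply: f_inj.
by move=> i; rewrite -pvalE insubdK // ffunE inordK.
Qed.

Section Tilde.
Variable m : nat.
Local Notation w i := (widen_ord (leqnSn m.+1) i).

Lemma widen_ord0 : w ord0 = ord0 :> 'I_m.+2.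
Proof. exact: ord_inj. Qed.

Lemma tilde1E (p : 'S_m.+2) : p ord_max = 0 :> nat ->
  forall i, tilde1 p i = p (w i) - 1 :> nat.
Proof.
move=> p_last; rewrite /tilde1; apply: insubd_inord_ffunE => [i|i j eq_ij].
  by have := ltn_ord (p (w i)); lia.
have := gt_last_min p_last (j := w i) (ltn_ord i).
have := gt_last_min p_last (j := w j) (ltn_ord j).
rewrite p_last => pos_j pos_i.
by apply: (perm_widen_inj (p := p)) => /=; lia.
Qed.

Lemma tilde1_shift (p : 'S_m.+2) : p ord_max = 0 :> nat ->
  forall i, p (w i) = tilde1 p i + 1 :> nat.
Proof.
move=> p_last i; rewrite tilde1E // subnK //.
by have := gt_last_min p_last (j := w i) (ltn_ord i); rewrite p_last.
Qed.

Lemma tildenE (p : 'S_m.+2) : p ord_max = m.+1 :> nat ->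
  forall i, tilden p i = p (w i) :> nat.
Proof.
move=> p_last; rewrite /tilden.
apply: insubd_inord_ffunE (@perm_widen_inj _ p) => i.
by have := lt_last_max p_last (j := w i) (ltn_ord i); rewrite p_last.
Qed.

(* The [+ 0] gives the shape [q i + c] expected by the lemmas of [Shift]. *)
Lemma tilden_shift (p : 'S_m.+2) : p ord_max = m.+1 :> nat ->
  forall i, p (w i) = tilden p i + 0 :> nat.
Proof. by move=> p_last i; rewrite addn0 tildenE. Qed.

Lemma tilde1_lift_perm (q : 'S_m.+1) : tilde1 (lift_perm ord_max ord0 q) = q.
Proof.
apply/permP => i; apply: ord_inj.
by rewrite tilde1E ?lift_perm_id // lift_perm_min_widen addnK.
Qed.

Lemma tilden_lift_perm (q : 'S_m.+1) : tilden (lift_perm ord_max ord_max q) = q.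
Proof.
apply/permP => i; apply: ord_inj.
by rewrite tildenE ?lift_perm_id // lift_perm_max_widen addn0.
Qed.

Lemma is_drop_last_min (p : 'S_m.+2) :
  p ord_max = 0 :> nat -> is_drop p ord_max.
Proof.
move=> p_last; apply/andP; split=> //.
by apply/forallP => j; apply/implyP; apply: gt_last_min.
Qed.

Lemma not_drop_last_max (p : 'S_m.+2) : p ord_max = m.+1 :> nat ->
  ~~ is_drop p ord_max.
Proof.
move=> p_last; rewrite negb_and negb_forall; apply/orP; right.
apply/existsP; exists ord0; rewrite negb_imply -leqNgt /=.
exact/ltnW/lt_last_max.
Qed.

End Tilde.

Section Bijections.
Variables m k : nat.

Lemma tilde1_inj : {in M1set m.+2 k &, injective (@tilde1 m)}.
Proof.
move=> p1 p2; rewrite !M1setE.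
move=> /and3P[_ _ /eqP p1_last] /and3P[_ _ /eqP p2_last] eq_tilde.
apply: perm_widen_eq => [|i]; first by rewrite p1_last p2_last.
by rewrite (tilde1_shift p1_last) (tilde1_shift p2_last) eq_tilde.
Qed.

Lemma tilden_inj : {in Mnset m.+2 k &, injective (@tilden m)}.
Proof.
move=> p1 p2; rewrite !MnsetE.
move=> /and3P[_ _ /eqP p1_last] /and3P[_ _ /eqP p2_last] eq_tilde.
apply: perm_widen_eq => [|i]; first by rewrite p1_last p2_last.
by rewrite (tilden_shift p1_last) (tilden_shift p2_last) eq_tilde.
Qed.

Lemma tilde1_Mset (p : 'S_m.+2) :
  p \in M1set m.+2 k -> tilde1 p \in Mset m.+1 k.-1.
Proof.
rewrite M1setE MsetE => /and3P[mono_p /eqP p_first /eqP p_last].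
have pE := tilde1_shift p_last.
rewrite (monotone_restrict pE mono_p).
by move: p_first; rewrite -(widen_ord0 m) pE addn1 => <- /=.
Qed.

Lemma tilden_Mset (p : 'S_m.+2) :
  p \in Mnset m.+2 k -> tilden p \in Mset m.+1 k.
Proof.
rewrite MnsetE MsetE => /and3P[mono_p /eqP p_first /eqP p_last].
have pE := tilden_shift p_last.
rewrite (monotone_restrict pE mono_p).
by move: p_first; rewrite -(widen_ord0 m) pE addn0 => -> /=.
Qed.

Lemma lift_perm_M1set (q : 'S_m.+1) : (0 < k)%N -> q \in Mset m.+1 k.-1 ->
  lift_perm ord_max ord0 q \in M1set m.+2 k.
Proof.
rewrite MsetE M1setE lift_perm_id eqxx andbT.
move=> k_gt0 /andP[mono_q /eqP q_first].
have pE := lift_perm_min_widen q; apply/andP; split.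
  apply: (monotone_extend pE mono_q); right.
  by apply: gt_last_min; rewrite lift_perm_id.
by have := pE ord0; rewrite widen_ord0 => ->; apply/eqP; lia.
Qed.

Lemma lift_perm_Mnset (q : 'S_m.+1) : q \in Mset m.+1 k ->
  lift_perm ord_max ord_max q \in Mnset m.+2 k.
Proof.
rewrite MsetE MnsetE lift_perm_id eqxx andbT => /andP[mono_q /eqP q_first].
have pE := lift_perm_max_widen q; apply/andP; split.
  apply: (monotone_extend pE mono_q); left.
  by apply: lt_last_max; rewrite lift_perm_id.
by have := pE ord0; rewrite widen_ord0 addn0 => ->; rewrite q_first.
Qed.

Lemma imset_tilde1 :
  (0 < k)%N -> (@tilde1 m) @: M1set m.+2 k = Mset m.+1 k.-1.
Proof.
move=> k_gt0; apply/setP => q; apply/imsetP/idP => [[p p_in ->]|q_in].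
  exact: tilde1_Mset.
exists (lift_perm ord_max ord0 q).
  exact: lift_perm_M1set.
by rewrite tilde1_lift_perm.
Qed.

Lemma imset_tilden : (@tilden m) @: Mnset m.+2 k = Mset m.+1 k.
Proof.
apply/setP => q; apply/imsetP/idP => [[p p_in ->]|q_in].
  exact: tilden_Mset.
exists (lift_perm ord_max ord_max q).
  by rewrite lift_perm_Mnset.
by rewrite tilden_lift_perm.
Qed.

Lemma dr_tilde1 (p : 'S_m.+2) :
  p \in M1set m.+2 k -> dr p = (dr (tilde1 p) + m.+2)%N.
Proof.
rewrite M1setE => /and3P[_ _ /eqP p_last].
by rewrite (dr_widen (tilde1_shift p_last)) is_drop_last_min // mul1n.
Qed.

Lemma dr_tilden (p : 'S_m.+2) : p \in Mnset m.+2 k -> dr p = dr (tilden p).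
Proof.
rewrite MnsetE => /and3P[_ _ /eqP p_last].
rewrite (dr_widen (tilden_shift p_last)).
by rewrite (negbTE (not_drop_last_max p_last)) addn0.
Qed.

End Bijections.

Local Open Scope ring_scope.

Theorem lemma2p8 (m k : nat) (hk : (1 <= k <= m.+2)%N) :
  [/\ (forall p, p \in M1set m.+2 k -> forall i : 'I_m.+1,
         (tilde1 p i : nat) = ((p (widen_ord (leqnSn m.+1) i) : nat) - 1)%N),
      {in M1set m.+2 k &, injective (@tilde1 m)},
      (@tilde1 m) @: M1set m.+2 k = Mset m.+1 k.-1
    & forall p, p \in M1set m.+2 k ->
         (-1) ^+ dr (tilde1 p) = (-1) ^+ (dr p + m.+2) :> int]
  /\
  [/\ (forall p, p \in Mnset m.+2 k -> forall i : 'I_m.+1,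
         (tilden p i : nat) = (p (widen_ord (leqnSn m.+1) i) : nat)),
      {in Mnset m.+2 k &, injective (@tilden m)},
      (@tilden m) @: Mnset m.+2 k = Mset m.+1 k
    & forall p, p \in Mnset m.+2 k ->
         (-1) ^+ dr (tilden p) = (-1) ^+ (dr p) :> int].
Proof.
split; split.
- by move=> p; rewrite M1setE => /and3P[_ _ /eqP /tilde1E].
- exact: tilde1_inj.
- by apply: imset_tilde1; case/andP: hk.
- move=> p /dr_tilde1 ->.
  by rewrite -addnA addnn -mul2n exprD exprM sqrrN expr1n mulr1.
- by move=> p; rewrite MnsetE => /and3P[_ _ /eqP /tildenE].
- exact: tilden_inj.
- exact: imset_tilden.
- by move=> p /dr_tilden ->.
Qed.
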